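(* Let $p\in[2,\infty]$ and $p^*=\frac{p}{p-1}$ (with $p^*=1$ when $p=\infty$). For every continuous bilinear form $T:X_p\times X_\infty\to\mathbb{R}$, \[ \left(\sum_{i=1}^{\infty}\left(\sum_{j=1}^{\infty}|T(e_i,e_j)|^2\right)^{\frac{1}{2}\cdot\frac{p}{p-1}}\right)^{\frac{p-1}{p}}\le \mathrm{A}_{p^*}\,\|T\|. \] In particular the optimal constant $C_{p,\infty}$ satisfies $C_{p,\infty}\le \mathrm{A}_{p^*}$.
   Context: Scalars are real. $X_p=\ell_p$ for $1\le p<\infty$ and $X_\infty=c_0$; $(e_k)$ denotes the canonical unit vectors. For a continuous bilinear form $T:X_p\times X_q\to\mathbb{R}$, $\|T\|=\sup\{|T(x,y)|:\|x\|_{X_p}\le1,\|y\|_{X_q}\le1\}$. The Rademacher functions are $r_j:[0,1]\to\mathbb{R}$, $r_j(t)=\operatorname{sign}(\sin(2^j\pi t))$. For $0<r<\infty$, $\mathrm{A}_r$ denotes the optimal (smallest) constant such that for all $n\in\mathbb{N}$ and all real $a_1,\dots,a_n$, $\left(\sum_{j=1}^n|a_j|^2\right)^{1/2}\le \mathrm{A}_r\left(\int_0^1\left|\sum_{j=1}^n a_jr_j(t)\right|^r dt\right)^{1/r}$ (Khintchine inequality). For $p\in[2,\infty]$, $C_{p,\infty}$ denotes the optimal constant $C$ such that $\left(\sum_{i}\left(\sum_{j}|T(e_i,e_j)|^2\right)^{\frac{p}{2(p-1)}}\right)^{\frac{p-1}{p}}\le C\|T\|$ for all continuous bilinear $T:X_p\times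 X_\infty\to\mathbb{R}$ (with exponent $p/(p-1)$ read as $1$ when $p=\infty$). *)

From Stdlib Require Import Reals Lra.
Open Scope R_scope.

(* Real power x^y for x >= 0, y > 0, with 0^y = 0 (Stdlib's Rpower 0 y = 1). *)
Definition rpow (x y : R) : R :=
  if Rle_dec x 0 then 0 else Rpower x y.

(* Exponents p in [2, infinity]: Some p = finite p, None = infinity. *)
Definition ext_exp := option R.

Definition valid_exp (p : ext_exp) : Prop :=
  match p with Some p => 2 <= p | None => True end.

Definition conj_exp (p : ext_exp) : R :=
  match p with Some p => p / (p - 1) | None => 1 end.

Definition in_X (p : ext_exp) (x : nat -> R) : Prop :=
  match p with
  | Some p => exists l, infinite_sum (fun k => rpow (Rabs (x k)) p) l
  | None => Un_cv x 0
  end.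

Definition in_ball (p : ext_exp) (x : nat -> R) : Prop :=
  match p with
  | Some p => exists l, infinite_sum (fun k => rpow (Rabs (x k)) p) l
                        /\ rpow l (1 / p) <= 1
  | None => Un_cv x 0 /\ (forall k, Rabs (x k) <= 1)
  end.

Definition e (i : nat) : nat -> R := fun k => if Nat.eq_dec k i then 1 else 0.

Definition lincomb (a b : R) (x y : nat -> R) : nat -> R :=
  fun k => a * x k + b * y k.

Definition bilinear_on (p q : ext_exp) (T : (nat -> R) -> (nat -> R) -> R) : Prop :=
  (forall a b x1 x2 y, in_X p x1 -> in_X p x2 -> in_X q y ->
     T (lincomb a b x1 x2) y = a * T x1 y + b * T x2 y) /\
  (forall a b x y1 y2, in_X p x -> in_X q y1 -> in_X q y2 ->
     T x (lincomb a b y1 y2) = a * T x y1 + b * T x y2).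

Definition norm_bound (p q : ext_exp) (T : (nat -> R) -> (nat -> R) -> R) (M : R) : Prop :=
  forall x y, in_ball p x -> in_ball q y -> Rabs (T x y) <= M.

(* Continuity of a bilinear form = boundedness. *)
Definition continuous_bilinear (p q : ext_exp) (T : (nat -> R) -> (nat -> R) -> R) : Prop :=
  bilinear_on p q T /\ exists M, norm_bound p q T M.

Definition is_opnorm (p q : ext_exp) (T : (nat -> R) -> (nat -> R) -> R) (N : R) : Prop :=
  is_lub (fun v => exists x y, in_ball p x /\ in_ball q y /\ v = Rabs (T x y)) N.

Definition Rsign (x : R) : R :=
  if Rlt_dec 0 x then 1 else if Rlt_dec x 0 then -1 else 0.

Definition rademacher (j : nat) (t : R) : R := Rsign (sin (2 ^ j * PI * t)).

(* A is a valid constant in the Khintchine inequality with exponent r: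
   for all n and a_1..a_n (here a (j-1) for j=1..n),
   (sum |a_j|^2)^(1/2) <= A (int_0^1 |sum a_j r_j(t)|^r dt)^(1/r). *)
Definition khintchine_valid (r A : R) : Prop :=
  forall (n : nat) (a : nat -> R) (v : R),
    (exists pr : Riemann_integrable
        (fun t => rpow (Rabs (sum_f_R0 (fun j => a j * rademacher (S j) t) n)) r) 0 1,
        RiemannInt pr = v) ->
    sqrt (sum_f_R0 (fun j => Rabs (a j) ^ 2) n) <= A * rpow v (1 / r).

Definition is_khintchine_opt (r A : R) : Prop :=
  (forall B, khintchine_valid r B -> A <= B) /\
  (forall B, (forall C, khintchine_valid r C -> B <= C) -> B <= A).

From Stdlib Require Import Reals Lra Lia FunctionalExtensionality Classical.
From Coquelicot Require Import Coquelicot.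
Open Scope R_scope.

(* Fix t in [0,1]. The vector y_t = sum_(j<=m) r_(j+1)(t) e_j lies in the unit
   ball of c_0, so x |-> T(x, y_t) is a functional of norm at most ||T|| on X_p;
   testing it against the Hoelder-extremal vector with coordinates
   sign(b_i) |b_i|^(p*-1), where b_i = T(e_i, y_t), gives sum_i |T(e_i, y_t)|^p* <= ||T||^p*.  Integrating
   in t and applying the Khintchine inequality with any admissible constant C to
   each row (T(e_i, e_j))_j yields
   sum_i (sum_j |T(e_i, e_j)|^2)^(p*/2) <= C^p* ||T||^p*,
   and A_p* is the infimum of such C. *)

Lemma rpow_ge0 x y : 0 <= rpow x y.
Proof. unfold rpow; destruct (Rle_dec x 0); [lra | left; apply exp_pos]. Qed.

Lemma rpow_nonpos x y : x <= 0 -> rpow x y = 0.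
Proof. unfold rpow; destruct (Rle_dec x 0); lra. Qed.

Lemma rpow_Rpower x y : 0 < x -> rpow x y = Rpower x y.
Proof. unfold rpow; destruct (Rle_dec x 0); lra. Qed.

Lemma rpow_gt0 x y : 0 < x -> 0 < rpow x y.
Proof. intros; rewrite rpow_Rpower by assumption; apply exp_pos. Qed.

Lemma rpow_mult_distr x y z : 0 <= x -> 0 <= y -> rpow (x * y) z = rpow x z * rpow y z.
Proof.
  intros [hx|<-] [hy|<-].
  - rewrite !rpow_Rpower by nra; symmetry; apply Rpower_mult_distr; assumption.
  - rewrite Rmult_0_r, !(rpow_nonpos 0); lra.
  - rewrite Rmult_0_l, !(rpow_nonpos 0); lra.
  - rewrite Rmult_0_l, !(rpow_nonpos 0); lra.
Qed.

Lemma rpow_mult x y z : 0 <= x -> rpow (rpow x y) z = rpow x (y * z).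
Proof.
  intros [hx|<-].
  - rewrite (rpow_Rpower x y), (rpow_Rpower x), rpow_Rpower by (auto; apply exp_pos).
    apply Rpower_mult.
  - rewrite !(rpow_nonpos 0); lra.
Qed.

Lemma rpow_plus x y z : 0 <= x -> rpow x (y + z) = rpow x y * rpow x z.
Proof.
  intros [hx|<-].
  - rewrite !rpow_Rpower by assumption; apply Rpower_plus.
  - rewrite !(rpow_nonpos 0); lra.
Qed.

Lemma rpow_1 x : 0 <= x -> rpow x 1 = x.
Proof.
  intros [hx|<-]; [rewrite rpow_Rpower by assumption; apply Rpower_1, hx | apply rpow_nonpos; lra].
Qed.

Lemma rpow_1_l z : rpow 1 z = 1.
Proof. rewrite rpow_Rpower by lra; unfold Rpower; rewrite ln_1, Rmult_0_r; apply exp_0. Qed.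

Lemma rpow_le_l x y z : 0 <= x <= y -> 0 < z -> rpow x z <= rpow y z.
Proof.
  intros [[hx|<-] hxy] hz.
  - rewrite !rpow_Rpower by lra; apply Rle_Rpower_l; lra.
  - rewrite rpow_nonpos by lra; apply rpow_ge0.
Qed.

Lemma rpow_inv x z : 0 < x -> rpow (/ x) z = / rpow x z.
Proof.
  intros hx.
  assert (hxz := rpow_gt0 x z hx).
  assert (h := rpow_mult_distr x (/ x) z).
  rewrite Rinv_r, rpow_1_l in h by lra.
  apply (Rmult_eq_reg_l (rpow x z)); [|lra].
  rewrite Rinv_r by lra; symmetry; apply h; left; [|apply Rinv_0_lt_compat]; assumption.
Qed.

Lemma rpow_sqrt x : 0 <= x -> rpow x (/ 2) = sqrt x.
Proof.
  intros [hx|<-]; [rewrite rpow_Rpower by assumption; apply Rpower_sqrt, hx|].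
  rewrite sqrt_0; apply rpow_nonpos; lra.
Qed.

Lemma rpow_rpow_inv x r : 0 <= x -> 0 < r -> rpow (rpow x r) (/ r) = x.
Proof. intros; rewrite rpow_mult, Rinv_r, rpow_1; lra. Qed.

Lemma rpow_inv_rpow x r : 0 <= x -> 0 < r -> rpow (rpow x (/ r)) r = x.
Proof. intros; rewrite rpow_mult, Rinv_l, rpow_1; lra. Qed.

Lemma infinite_sum_eventually_0 (u : nat -> R) n :
  (forall k, (n < k)%nat -> u k = 0) -> infinite_sum u (sum_f_R0 u n).
Proof.
  intros hu eps heps; exists n; intros N hN; unfold R_dist.
  replace (sum_f_R0 u N) with (sum_f_R0 u n); [rewrite Rminus_diag, Rabs_R0; lra|].
  induction hN as [|N hN IH]; [reflexivity|].
  simpl; rewrite <- IH, hu by lia; ring.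
Qed.

Lemma Un_cv_eventually_0 (u : nat -> R) n :
  (forall k, (n < k)%nat -> u k = 0) -> Un_cv u 0.
Proof.
  intros hu eps heps; exists (S n); intros N hN; unfold R_dist.
  rewrite hu by lia; rewrite Rminus_diag, Rabs_R0; lra.
Qed.

Lemma in_X_eventually_0 p (u : nat -> R) n :
  (forall k, (n < k)%nat -> u k = 0) -> in_X p u.
Proof.
  intros hu; destruct p as [q|]; simpl.
  - exists (sum_f_R0 (fun k => rpow (Rabs (u k)) q) n).
    apply infinite_sum_eventually_0; intros k hk.
    rewrite hu, Rabs_R0 by assumption; apply rpow_nonpos; lra.
  - apply (Un_cv_eventually_0 _ n hu).
Qed.

Lemma e_in_X p i : in_X p (e i).
Proof.
  apply (in_X_eventually_0 p _ i); intros k hk; unfold e.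
  destruct (Nat.eq_dec k i); [lia | reflexivity].
Qed.

Lemma in_ball_0 p : in_ball p (fun _ => 0).
Proof.
  destruct p as [q|]; simpl.
  - assert (h0 : rpow (Rabs 0) q = 0) by (rewrite Rabs_R0; apply rpow_nonpos; lra).
    exists (sum_f_R0 (fun _ => rpow (Rabs 0) q) 0); split.
    + apply infinite_sum_eventually_0; intros; exact h0.
    + simpl; rewrite h0, rpow_nonpos; lra.
  - split; [apply (Un_cv_eventually_0 _ 0); reflexivity | intros; rewrite Rabs_R0; lra].
Qed.

Definition trunc_seq (n : nat) (c : nat -> R) : nat -> R :=
  fun k => if Compare_dec.le_dec k n then c k else 0.

Lemma trunc_seq_out n c k : (n < k)%nat -> trunc_seq n c k = 0.
Proof. intros; unfold trunc_seq; destruct (Compare_dec.le_dec k n); [lia | reflexivity]. Qed.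

Lemma trunc_seq_in n c k : (k <= n)%nat -> trunc_seq n c k = c k.
Proof. intros; unfold trunc_seq; destruct (Compare_dec.le_dec k n); [reflexivity | lia]. Qed.

Lemma trunc_seq_in_X p n c : in_X p (trunc_seq n c).
Proof. apply (in_X_eventually_0 p _ n), trunc_seq_out. Qed.

Lemma trunc_seq_0 c : trunc_seq 0 c = lincomb (c 0%nat) 0 (e 0) (e 0).
Proof.
  apply functional_extensionality; intros k; unfold trunc_seq, lincomb, e.
  destruct (Compare_dec.le_dec k 0), (Nat.eq_dec k 0); subst; (lia || ring).
Qed.

Lemma trunc_seq_S n c :
  trunc_seq (S n) c = lincomb 1 (c (S n)) (trunc_seq n c) (e (S n)).
Proof.
  apply functional_extensionality; intros k; unfold trunc_seq, lincomb, e.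
  destruct (Compare_dec.le_dec k (S n)), (Compare_dec.le_dec k n), (Nat.eq_dec k (S n)); subst; (lia || ring).
Qed.

Definition linear_on (p : ext_exp) (f : (nat -> R) -> R) : Prop :=
  forall a b x1 x2, in_X p x1 -> in_X p x2 ->
    f (lincomb a b x1 x2) = a * f x1 + b * f x2.

Lemma bilinear_on_l p q T y : bilinear_on p q T -> in_X q y -> linear_on p (fun x => T x y).
Proof. intros [hl _] hy a b x1 x2 hx1 hx2; apply hl; assumption. Qed.

Lemma bilinear_on_r p q T x : bilinear_on p q T -> in_X p x -> linear_on q (T x).
Proof. intros [_ hr] hx a b y1 y2 hy1 hy2; apply hr; assumption. Qed.

Lemma linear_on_trunc_seq p f n c : linear_on p f ->
  f (trunc_seq n c) = sum_f_R0 (fun i => c i * f (e i)) n.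
Proof.
  intros hf; induction n as [|n IH].
  - rewrite trunc_seq_0, hf by apply e_in_X; simpl; ring.
  - rewrite trunc_seq_S, hf, IH by (apply trunc_seq_in_X || apply e_in_X); simpl; ring.
Qed.

Lemma Rsign_bound x : Rabs (Rsign x) <= 1.
Proof.
  unfold Rsign, Rabs; destruct (Rlt_dec 0 x), (Rlt_dec x 0), Rcase_abs; lra.
Qed.

Lemma Rsign_mult x : Rsign x * x = Rabs x.
Proof.
  unfold Rsign; destruct (Rlt_dec 0 x), (Rlt_dec x 0); [lra | | |].
  - rewrite Rabs_right; lra.
  - rewrite Rabs_left; lra.
  - replace x with 0 by lra; rewrite Rabs_R0; lra.
Qed.

Lemma Rsign_abs_rpow x s : Rabs (Rsign x) * rpow (Rabs x) s = rpow (Rabs x) s.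
Proof.
  unfold Rsign; destruct (Rlt_dec 0 x), (Rlt_dec x 0); [lra | | |].
  - rewrite Rabs_R1; lra.
  - rewrite Rabs_left; lra.
  - replace x with 0 by lra; rewrite Rabs_R0, rpow_nonpos; lra.
Qed.

Lemma trunc_seq_in_ball_c0 n c : (forall i, Rabs (c i) <= 1) -> in_ball None (trunc_seq n c).
Proof.
  intros hc; split; [apply (Un_cv_eventually_0 _ n), trunc_seq_out|].
  intros k; unfold trunc_seq; destruct (Compare_dec.le_dec k n); [apply hc | rewrite Rabs_R0; lra].
Qed.

Lemma trunc_seq_in_ball_lp q n c : 0 < q ->
  sum_f_R0 (fun k => rpow (Rabs (c k)) q) n <= 1 -> in_ball (Some q) (trunc_seq n c).
Proof.
  intros hq hc; exists (sum_f_R0 (fun k => rpow (Rabs (trunc_seq n c k)) q) n); split.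
  - apply infinite_sum_eventually_0; intros k hk.
    rewrite trunc_seq_out, Rabs_R0 by assumption; apply rpow_nonpos; lra.
  - rewrite (sum_eq _ (fun k => rpow (Rabs (c k)) q))
      by (intros k hk; rewrite trunc_seq_in by assumption; reflexivity).
    apply Rle_trans with (rpow 1 (1 / q)); [|rewrite rpow_1_l; lra].
    apply rpow_le_l; [split; [apply cond_pos_sum; intros; apply rpow_ge0 | assumption]|].
    apply Rdiv_lt_0_compat; lra.
Qed.

Lemma dual_c0_bound f N n : linear_on None f ->
  (forall x, in_ball None x -> Rabs (f x) <= N) ->
  sum_f_R0 (fun i => Rabs (f (e i))) n <= N.
Proof.
  intros hf hN.
  set (x := trunc_seq n (fun i => Rsign (f (e i)))).
  assert (hfx : f x = sum_f_R0 (fun i => Rabs (f (e i))) n).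
  { unfold x; rewrite (linear_on_trunc_seq None f n _ hf).
    apply sum_eq; intros; apply Rsign_mult. }
  rewrite <- hfx; eapply Rle_trans; [apply Rle_abs | apply hN].
  apply trunc_seq_in_ball_c0; intros; apply Rsign_bound.
Qed.

Lemma holder_conj q : 1 < q ->
  1 < q / (q - 1) /\ (q / (q - 1) - 1) * q = q / (q - 1) /\ / (q / (q - 1)) + / q = 1.
Proof.
  intros hq; repeat split; [|field; lra|field; lra].
  apply (Rmult_lt_reg_r (q - 1)); [lra|].
  unfold Rdiv; rewrite Rmult_assoc, Rinv_l; lra.
Qed.

Lemma dual_lp_bound q f N n : 1 < q -> linear_on (Some q) f ->
  (forall x, in_ball (Some q) x -> Rabs (f x) <= N) ->
  sum_f_R0 (fun i => rpow (Rabs (f (e i))) (q / (q - 1))) n <= rpow N (q / (q - 1)).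
Proof.
  intros hq hf hN.
  destruct (holder_conj q hq) as (hr & hrq & hinv).
  set (r := q / (q - 1)) in *.
  set (S := sum_f_R0 (fun i => rpow (Rabs (f (e i))) r) n).
  destruct (Rle_lt_or_eq_dec 0 S) as [hS|hS];
    [apply cond_pos_sum; intros; apply rpow_ge0 | | rewrite <- hS; apply rpow_ge0].
  set (s := rpow S (/ q)).
  assert (hs : 0 < s) by (apply rpow_gt0; exact hS).
  (* the extremal vector of Hoelder's inequality, normalised in l_q *)
  set (c := fun i => Rsign (f (e i)) * rpow (Rabs (f (e i))) (r - 1) / s).
  assert (hc_norm : forall i, rpow (Rabs (c i)) q = rpow (Rabs (f (e i))) r / S).
  { intros i; unfold c, Rdiv.
    rewrite !Rabs_mult, (Rabs_right (rpow _ _)), (Rabs_right (/ s)), Rsign_abs_rpow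
      by (apply Rle_ge; (apply rpow_ge0 || (left; apply Rinv_0_lt_compat; exact hs))).
    rewrite rpow_mult_distr, rpow_mult, hrq, rpow_inv
      by (apply Rabs_pos || apply rpow_ge0 || lra || (left; apply Rinv_0_lt_compat; exact hs)).
    unfold s; rewrite rpow_inv_rpow by lra; reflexivity. }
  assert (hc_pair : forall i, c i * f (e i) = rpow (Rabs (f (e i))) r / s).
  { intros i; unfold c.
    replace (Rsign (f (e i)) * rpow (Rabs (f (e i))) (r - 1) / s * f (e i))
      with (Rsign (f (e i)) * f (e i) * rpow (Rabs (f (e i))) (r - 1) / s) by (field; lra).
    rewrite Rsign_mult, <- (rpow_1 (Rabs (f (e i)))) at 1 by apply Rabs_pos.
    rewrite <- rpow_plus by apply Rabs_pos.
    replace (1 + (r - 1)) with r by ring; reflexivity. }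
  assert (hball : in_ball (Some q) (trunc_seq n c)).
  { apply trunc_seq_in_ball_lp; [lra|].
    rewrite (sum_eq _ _ _ (fun i _ => hc_norm i)); unfold Rdiv; rewrite <- scal_sum.
    fold S; rewrite Rinv_l; lra. }
  assert (hfc : f (trunc_seq n c) = S / s).
  { rewrite (linear_on_trunc_seq _ f n c hf), (sum_eq _ _ _ (fun i _ => hc_pair i)).
    unfold Rdiv; rewrite <- scal_sum; fold S; ring. }
  assert (hSs : S / s = rpow S (/ r)).
  { apply (Rmult_eq_reg_r s); [|lra].
    unfold Rdiv; rewrite Rmult_assoc, Rinv_l by lra.
    unfold s; rewrite <- rpow_plus, hinv, rpow_1; lra. }
  assert (hSN : rpow S (/ r) <= N).
  { rewrite <- hSs, <- hfc; eapply Rle_trans; [apply Rle_abs | apply hN, hball]. }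
  rewrite <- (rpow_inv_rpow S r) by lra.
  apply rpow_le_l; [split; [apply rpow_ge0 | exact hSN] | lra].
Qed.

Lemma dual_coeffs_bound p f N n : valid_exp p -> linear_on p f ->
  (forall x, in_ball p x -> Rabs (f x) <= N) ->
  sum_f_R0 (fun i => rpow (Rabs (f (e i))) (conj_exp p)) n <= rpow N (conj_exp p).
Proof.
  intros hp hf hN; destruct p as [q|]; simpl.
  - apply dual_lp_bound; [simpl in hp; lra | exact hf | exact hN].
  - assert (hN0 : 0 <= N) by (eapply Rle_trans; [apply Rabs_pos | apply hN, in_ball_0]).
    rewrite rpow_1, (sum_eq _ (fun i => Rabs (f (e i)))) by (assumption || (intros; apply rpow_1, Rabs_pos)).
    apply dual_c0_bound; assumption.
Qed.

Lemma opnorm_ub p q T N x y : is_opnorm p q T N -> in_ball p x -> in_ball q y ->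
  Rabs (T x y) <= N.
Proof. intros [hub _] hx hy; apply hub; exists x, y; auto. Qed.

Lemma opnorm_ge0 p q T N : is_opnorm p q T N -> 0 <= N.
Proof.
  intros hN; eapply Rle_trans; [apply Rabs_pos|].
  apply (opnorm_ub p q T N (fun _ => 0) (fun _ => 0) hN); apply in_ball_0.
Qed.

Lemma conj_exp_ge1 p : valid_exp p -> 1 <= conj_exp p.
Proof.
  destruct p as [q|]; simpl; intros hq; [|lra].
  destruct (holder_conj q) as [hr _]; lra.
Qed.

Lemma Rsign_opp x : Rsign (- x) = - Rsign x.
Proof.
  unfold Rsign; destruct (Rlt_dec 0 x), (Rlt_dec x 0), (Rlt_dec 0 (- x)), (Rlt_dec (- x) 0); lra.
Qed.

Lemma Rsign_sin_PI M s : INR M < s < INR M + 1 -> Rsign (sin (PI * s)) = (-1) ^ M.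
Proof.
  revert s; induction M as [|M IH]; intros s hs.
  - assert (hPI := PI_RGT_0).
    assert (hsin : 0 < sin (PI * s)) by (simpl in hs; apply sin_gt_0; nra).
    unfold Rsign; destruct (Rlt_dec 0 (sin (PI * s))); simpl; lra.
  - rewrite S_INR in hs.
    replace (PI * s) with (PI * (s - 1) + PI) by ring.
    rewrite neg_sin, Rsign_opp, IH by lra; simpl; ring.
Qed.

Lemma dyadic_interval_nested j N k t : (j <= N)%nat ->
  INR k / 2 ^ N < t < (INR k + 1) / 2 ^ N ->
  INR (k / 2 ^ (N - j)) < 2 ^ j * t < INR (k / 2 ^ (N - j)) + 1.
Proof.
  intros hjN ht.
  set (d := (N - j)%nat); set (M := (k / 2 ^ d)%nat).
  assert (h2d : (2 ^ d <> 0)%nat) by (apply Nat.pow_nonzero; lia).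
  assert (hlo : (M * 2 ^ d <= k)%nat) by (unfold M; rewrite Nat.mul_comm; apply Nat.Div0.mul_div_le).
  assert (hhi : (k + 1 <= (M + 1) * 2 ^ d)%nat).
  { assert (hdiv := Nat.div_mod k (2 ^ d) h2d).
    assert (hmod := Nat.mod_upper_bound k (2 ^ d) h2d); unfold M; nia. }
  apply le_INR in hlo, hhi; rewrite !mult_INR, pow_INR in hlo, hhi; rewrite !plus_INR in hhi.
  replace (INR 2) with 2 in hlo, hhi by (simpl; ring).
  assert (hpd : 0 < 2 ^ d) by (apply pow_lt; lra).
  assert (hN : 2 ^ N = 2 ^ j * 2 ^ d) by (rewrite <- pow_add; f_equal; unfold d; lia).
  destruct ht as [ht1 ht2].
  apply Rlt_div_l in ht1; [|apply pow_lt; lra].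
  apply Rlt_div_r in ht2; [|apply pow_lt; lra].
  rewrite hN in ht1, ht2.
  simpl in hhi; split; nra.
Qed.

Lemma rademacher_dyadic_const j N k t t' : (j <= N)%nat ->
  INR k / 2 ^ N < t < (INR k + 1) / 2 ^ N ->
  INR k / 2 ^ N < t' < (INR k + 1) / 2 ^ N ->
  rademacher j t = rademacher j t'.
Proof.
  intros hjN ht ht'; unfold rademacher.
  replace (2 ^ j * PI * t) with (PI * (2 ^ j * t)) by ring.
  replace (2 ^ j * PI * t') with (PI * (2 ^ j * t')) by ring.
  rewrite !(Rsign_sin_PI (k / 2 ^ (N - j))) by (apply (dyadic_interval_nested j N k); assumption).
  reflexivity.
Qed.

Lemma ex_RInt_dyadic_step (g : R -> R) N :
  (forall k t t', INR k / 2 ^ N < t < (INR k + 1) / 2 ^ N ->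
     INR k / 2 ^ N < t' < (INR k + 1) / 2 ^ N -> g t = g t') ->
  ex_RInt g 0 1.
Proof.
  intros hg.
  assert (h2N : 0 < 2 ^ N) by (apply pow_lt; lra).
  assert (hK : forall K, ex_RInt g 0 (INR K / 2 ^ N)).
  { induction K as [|K IH]; [simpl; unfold Rdiv; rewrite Rmult_0_l; apply ex_RInt_point|].
    apply (ex_RInt_Chasles _ _ _ _ IH); rewrite S_INR.
    set (a := INR K / 2 ^ N); set (b := (INR K + 1) / 2 ^ N).
    assert (hab : a < b) by (unfold a, b, Rdiv; apply Rmult_lt_compat_r; [apply Rinv_0_lt_compat|]; lra).
    apply ex_RInt_ext with (f := fun _ => g ((a + b) / 2)); [|apply ex_RInt_const].
    intros x hx; rewrite Rmin_left, Rmax_right in hx by lra.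
    apply (hg K); fold a b; lra. }
  specialize (hK (2 ^ N)%nat); rewrite pow_INR in hK.
  replace (INR 2) with 2 in hK by (simpl; ring).
  unfold Rdiv in hK; rewrite Rinv_r in hK by lra; exact hK.
Qed.

Definition rademacher_sum (a : nat -> R) (n : nat) (t : R) : R :=
  sum_f_R0 (fun j => a j * rademacher (S j) t) n.

Lemma ex_RInt_rademacher_moment a n r :
  ex_RInt (fun t => rpow (Rabs (rademacher_sum a n t)) r) 0 1.
Proof.
  apply (ex_RInt_dyadic_step _ (S n)); intros k t t' ht ht'.
  unfold rademacher_sum; do 2 f_equal; apply sum_eq; intros j hj.
  f_equal; apply (rademacher_dyadic_const (S j) (S n) k); (lia || assumption).
Qed.

Lemma khintchine_valid_RInt r C a n : khintchine_valid r C ->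
  sqrt (sum_f_R0 (fun j => Rabs (a j) ^ 2) n)
    <= C * rpow (RInt (fun t => rpow (Rabs (rademacher_sum a n t)) r) 0 1) (1 / r).
Proof.
  intros hC; apply hC.
  exists (ex_RInt_Reals_0 _ _ _ (ex_RInt_rademacher_moment a n r)).
  rewrite <- RInt_Reals; reflexivity.
Qed.

Lemma khintchine_valid_pos r C : khintchine_valid r C -> 0 < C.
Proof.
  intros hC; assert (h := khintchine_valid_RInt r C (fun _ => 1) 0 hC); simpl in h.
  rewrite Rabs_R1, !Rmult_1_l, sqrt_1 in h.
  assert (0 <= rpow (RInt (fun t => rpow (Rabs (rademacher_sum (fun _ => 1) 0 t)) r) 0 1) (1 / r))
    by apply rpow_ge0.
  destruct (Rle_lt_dec C 0); nra.
Qed.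

Lemma khintchine_valid_rpow r C a n : 0 < r -> khintchine_valid r C ->
  rpow (sum_f_R0 (fun j => Rabs (a j) ^ 2) n) (/ 2 * r)
    <= rpow C r * RInt (fun t => rpow (Rabs (rademacher_sum a n t)) r) 0 1.
Proof.
  intros hr hC.
  assert (hsum : 0 <= sum_f_R0 (fun j => Rabs (a j) ^ 2) n)
    by (apply cond_pos_sum; intros; apply pow2_ge_0).
  assert (hint : 0 <= RInt (fun t => rpow (Rabs (rademacher_sum a n t)) r) 0 1).
  { apply RInt_ge_0; [lra | apply ex_RInt_rademacher_moment | intros; apply rpow_ge0]. }
  rewrite <- rpow_mult, rpow_sqrt by assumption.
  eapply Rle_trans.
  - apply rpow_le_l; [split; [apply sqrt_pos | apply khintchine_valid_RInt, hC] | exact hr].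
  - rewrite rpow_mult_distr, Rdiv_1_l, rpow_inv_rpow by
      (assumption || apply rpow_ge0 || (left; apply (khintchine_valid_pos r C hC))).
    lra.
Qed.

Lemma is_RInt_sum_f_R0 (F : nat -> R -> R) (l : nat -> R) a b n :
  (forall i, is_RInt (F i) a b (l i)) ->
  is_RInt (fun t => sum_f_R0 (fun i => F i t) n) a b (sum_f_R0 l n).
Proof.
  intros hF; induction n as [|n IH]; simpl; [apply hF|].
  apply (is_RInt_plus (fun t => sum_f_R0 (fun i => F i t) n) (F (S n))); [exact IH | apply hF].
Qed.

Lemma rademacher_rows_bound p T N n m :
  valid_exp p -> bilinear_on p None T -> is_opnorm p None T N ->
  sum_f_R0 (fun i => RInt (fun t =>
      rpow (Rabs (rademacher_sum (fun j => T (e i) (e j)) m t)) (conj_exp p)) 0 1) n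
    <= rpow N (conj_exp p).
Proof.
  intros hp hT hN.
  set (F := fun i t => rpow (Rabs (rademacher_sum (fun j => T (e i) (e j)) m t)) (conj_exp p)).
  assert (hpointwise : forall t, sum_f_R0 (fun i => F i t) n <= rpow N (conj_exp p)).
  { intros t; set (y := trunc_seq m (fun j => rademacher (S j) t)).
    assert (hy : in_ball None y) by (apply trunc_seq_in_ball_c0; intros; apply Rsign_bound).
    assert (hTy : forall i, T (e i) y = rademacher_sum (fun j => T (e i) (e j)) m t).
    { intros i; unfold y; rewrite (linear_on_trunc_seq None (T (e i))) by
        (apply (bilinear_on_r p), e_in_X; exact hT).
      apply sum_eq; intros; ring. }
    replace (sum_f_R0 (fun i => F i t) n)
      with (sum_f_R0 (fun i => rpow (Rabs (T (e i) y)) (conj_exp p)) n)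
      by (apply sum_eq; intros i _; unfold F; rewrite hTy; reflexivity).
    apply (dual_coeffs_bound p (fun x => T x y)); [exact hp | apply (bilinear_on_l p None); [exact hT | exact (proj1 hy)] |].
    intros x hx; apply (opnorm_ub p None T N x y hN hx hy). }
  assert (hsum := is_RInt_sum_f_R0 F (fun i => RInt (F i) 0 1) 0 1 n
    (fun i => RInt_correct _ _ _ (ex_RInt_rademacher_moment _ _ _))).
  change (sum_f_R0 (fun i => RInt (F i) 0 1) n <= rpow N (conj_exp p)).
  rewrite <- (is_RInt_unique _ _ _ _ hsum).
  apply Rle_trans with (RInt (fun _ => rpow N (conj_exp p)) 0 1).
  - apply RInt_le; [lra | eexists; exact hsum | apply ex_RInt_const | intros; apply hpointwise].
  - rewrite RInt_const; unfold scal; simpl; unfold mult; simpl; lra.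
Qed.

Lemma row_norms_le_khintchine_valid p T N C n m :
  valid_exp p -> bilinear_on p None T -> is_opnorm p None T N ->
  khintchine_valid (conj_exp p) C ->
  rpow (sum_f_R0 (fun i =>
          rpow (sum_f_R0 (fun j => Rabs (T (e i) (e j)) ^ 2) m) (/ 2 * conj_exp p)) n)
       (/ conj_exp p)
    <= C * N.
Proof.
  intros hp hT hN hC.
  assert (hrows := rademacher_rows_bound p T N n m hp hT hN).
  assert (hr := conj_exp_ge1 p hp); set (r := conj_exp p) in *.
  assert (hC0 := khintchine_valid_pos r C hC).
  assert (hN0 := opnorm_ge0 _ _ _ _ hN).
  apply Rle_trans with (rpow (rpow C r * rpow N r) (/ r)).
  2:{ rewrite <- rpow_mult_distr, rpow_rpow_inv by (apply Rmult_le_pos || idtac; lra). lra. }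
  apply rpow_le_l; [split | apply Rinv_0_lt_compat; lra].
  { apply cond_pos_sum; intros; apply rpow_ge0. }
  apply Rle_trans with (sum_f_R0 (fun i => RInt (fun t =>
      rpow (Rabs (rademacher_sum (fun j => T (e i) (e j)) m t)) r) 0 1 * rpow C r) n).
  - apply sum_Rle; intros i _; rewrite (Rmult_comm (RInt _ _ _)); apply khintchine_valid_rpow; [lra | exact hC].
  - rewrite <- scal_sum.
    apply Rmult_le_compat_l; [apply rpow_ge0 | exact hrows].
Qed.

Lemma le_glb_mult (P : R -> Prop) A L N :
  (forall B, (forall C, P C -> B <= C) -> B <= A) -> 0 <= N ->
  (forall C, P C -> L <= C * N) -> L <= A * N.
Proof.
  intros hA [hN|<-] hL.
  - apply (Rmult_le_reg_r (/ N)); [apply Rinv_0_lt_compat, hN|].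
    rewrite Rmult_assoc, Rinv_r, Rmult_1_r by lra.
    apply hA; intros C hC; apply (Rmult_le_reg_r N); [exact hN|].
    rewrite Rmult_assoc, Rinv_l, Rmult_1_r by lra; apply hL, hC.
  - destruct (classic (exists C, P C)) as [[C hC]|hnone].
    + rewrite Rmult_0_r; specialize (hL C hC); lra.
    + exfalso; assert (hA1 : A + 1 <= A) by (apply hA; intros C hC; exfalso; eauto); lra.
Qed.

Theorem theorem2p1 (p : ext_exp) (Hp : valid_exp p)
  (T : (nat -> R) -> (nat -> R) -> R)
  (HT : continuous_bilinear p None T)
  (normT : R) (HnormT : is_opnorm p None T normT)
  (Ap : R) (HAp : is_khintchine_opt (conj_exp p) Ap) :
  forall n m : nat,
    rpow (sum_f_R0 (fun i =>
            rpow (sum_f_R0 (fun j => Rabs (T (e i) (e j)) ^ 2) m)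
                 (/ 2 * conj_exp p)) n)
         (/ conj_exp p)
    <= Ap * normT.
Proof.
  intros n m; destruct HT as [hbil _]; destruct HAp as [_ hglb].
  apply (le_glb_mult (khintchine_valid (conj_exp p))); [exact hglb | |].
  - apply (opnorm_ge0 _ _ _ _ HnormT).
  - intros C hC; apply row_norms_le_khintchine_valid; assumption.
Qed.
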